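(* Let $(Y,S,\gamma)$ be a machine with $Y,S$ finite sets such that $\gamma(y'\mid y,s)>0$ for all $y,y'\in Y$ and $s\in S$. Then for every finite set $H$ and every consistent Bayesian filtering interpretation $(H,\psi_H,\kappa)$ of $\gamma$, the interpretation map is constant: $\psi_H(\cdot\mid y)=\psi_H(\cdot\mid y')$ for all $y,y'\in Y$.
   Context: For finite sets, a Markov kernel $k\colon X\to P(Z)$ is given by numbers $k(z\mid x)\ge0$ with $\sum_z k(z\mid x)=1$. A machine $(Y,S,\gamma)$ consists of a state set $Y$, an input set $S$ and a Markov kernel $\gamma\colon Y\times S\to P(Y)$. Given $\psi_H\colon Y\to P(H)$ and $\kappa\colon H\to P(H\times S)$, define $\psi_{S,H'}(h,s\mid y)=\sum_{h_0\in H}\psi_H(h_0\mid y)\,\kappa(h,s\mid h_0)$ and $\psi_S(s\mid y)=\sum_{h\in H}\psi_{S,H'}(h,s\mid y)$. The triple $(H,\psi_H,\kappa)$ is a consistent Bayesian filtering interpretation of $\gamma$ if for all $y,y'\in Y$, $s\in S$, $h\in H$: $$\psi_{S,H'}(h,s\mid y)\,\gamma(y'\mid y,s)=\psi_S(s\mid y)\,\gamma(y'\mid y,s)\,\psi_H(h\mid y').$$ *)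

From mathcomp Require Import all_boot all_order all_algebra.
Set Implicit Arguments. Unset Strict Implicit. Unset Printing Implicit Defensive.
Import Order.TTheory GRing.Theory Num.Theory.
Local Open Scope ring_scope.

Definition markov_kernel (R : realFieldType) (X Z : finType) (k : X -> Z -> R) : Prop :=
  forall x, (forall z, 0 <= k x z) /\ \sum_(z : Z) k x z = 1.

Definition psiSH (R : realFieldType) (Y S H : finType)
  (psiH : Y -> H -> R) (kappa : H -> (H * S)%type -> R) (y : Y) (h : H) (s : S) : R :=
  \sum_(h0 : H) psiH y h0 * kappa h0 (h, s).

Definition psiS (R : realFieldType) (Y S H : finType)
  (psiH : Y -> H -> R) (kappa : H -> (H * S)%type -> R) (y : Y) (s : S) : R :=
  \sum_(h : H) psiSH psiH kappa y h s.

(* (H, psiH, kappa) is a consistent Bayesian filtering interpretation of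
   gamma : Y * S -> P(Y), where gamma (y, s) y' = gamma(y' | y, s). *)
Definition consistent_BFI (R : realFieldType) (Y S H : finType)
  (gamma : (Y * S)%type -> Y -> R)
  (psiH : Y -> H -> R) (kappa : H -> (H * S)%type -> R) : Prop :=
  markov_kernel psiH /\ markov_kernel kappa /\
  forall (y y' : Y) (s : S) (h : H),
    psiSH psiH kappa y h s * gamma (y, s) y'
    = psiS psiH kappa y s * gamma (y, s) y' * psiH y' h.

From mathcomp Require Import all_boot all_order all_algebra.
From Stdlib Require Import FunctionalExtensionality.
Import Order.TTheory GRing.Theory Num.Theory.
Local Open Scope ring_scope.

(* Where gamma(y' | y, s) > 0 the consistency equation cancels to
   psi_{S,H'}(h, s | y) = psi_S(s | y) psi_H(h | y'); summing over s, and using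
   that psi_S(. | y) is a probability, gives psi_H(h | y') = sum_s psi_{S,H'}(h, s | y),
   a quantity that does not depend on y'. *)

Section BayesianFiltering.

Context {R : realFieldType} {Y S H : finType} {gamma : (Y * S)%type -> Y -> R}.
Context {psiH : Y -> H -> R} {kappa : H -> (H * S)%type -> R}.

Lemma sum_psiS (y : Y) :
  markov_kernel psiH -> markov_kernel kappa -> \sum_(s : S) psiS psiH kappa y s = 1.
Proof.
move=> mpsiH mkappa; rewrite /psiS /psiSH.
under eq_bigr do rewrite exchange_big /=.
rewrite exchange_big /= -(proj2 (mpsiH y)); apply: eq_bigr => h0 _.
under eq_bigr do rewrite -mulr_sumr.
rewrite -mulr_sumr -[RHS]mulr1 exchange_big /=; congr (_ * _).
rewrite -(proj2 (mkappa h0)) [RHS](eq_bigr (fun p => kappa h0 (p.1, p.2))); last by case.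
by rewrite -(pair_bigA _ (fun h s => kappa h0 (h, s))).
Qed.

Lemma psiSH_factor {y y' : Y} {s : S} {h : H} :
  gamma (y, s) y' != 0 ->
  psiSH psiH kappa y h s * gamma (y, s) y'
    = psiS psiH kappa y s * gamma (y, s) y' * psiH y' h ->
  psiSH psiH kappa y h s = psiS psiH kappa y s * psiH y' h.
Proof. by move=> /mulIf cancel_gamma; rewrite mulrAC => /cancel_gamma. Qed.

Lemma psiH_eq_sum_psiSH {y y' : Y} (h : H) :
  (forall s, 0 < gamma (y, s) y') -> consistent_BFI gamma psiH kappa ->
  psiH y' h = \sum_(s : S) psiSH psiH kappa y h s.
Proof.
move=> gamma_pos [mpsiH [mkappa consistent]].
under eq_bigr => s _ do rewrite (psiSH_factor (lt0r_neq0 (gamma_pos s)) (consistent _ _ _ _)).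
by rewrite -mulr_suml sum_psiS // mul1r.
Qed.

End BayesianFiltering.

Theorem mainTheorem4 (R : realFieldType) (Y S : finType)
  (gamma : (Y * S)%type -> Y -> R) :
  markov_kernel gamma ->
  (forall (y y' : Y) (s : S), 0 < gamma (y, s) y') ->
  forall (H : finType) (psiH : Y -> H -> R) (kappa : H -> (H * S)%type -> R),
    consistent_BFI gamma psiH kappa ->
    forall y y' : Y, psiH y = psiH y'.
Proof.
move=> _ gamma_pos H psiH kappa bfi y y'; apply: functional_extensionality => h.
by rewrite !(psiH_eq_sum_psiSH h (gamma_pos y _) bfi).
Qed.
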